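(* Let $w\in\mathbb{C}^k$ be a unit vector with $w_i\ne0$ for all $i\in\{1,\ldots,k\}$, let $R'$ be a tolerance relation on $\{1,\ldots,k\}$ and $T':M_k(\mathbb{C})\to A(R')$, $T'(b)=\sum_{(i,j)\in R'}E_{ii}bE_{jj}$, the corresponding truncation map. If $T'(P_w)$ is the weak density matrix of a pure state of $A(R')$ (i.e. the state $a\mapsto \mathrm{Tr}(T'(P_w)a)$ on $A(R')$ is pure), then the graph of $R'$ is connected.
   Context: A tolerance relation is a reflexive and symmetric relation; its graph has an edge between $i\ne j$ whenever $(i,j)\in R'$. $A(R')=T'(M_k(\mathbb{C}))$ is the operator system of matrices vanishing at positions outside $R'$; its states are linear functionals $\varphi$ with $\varphi(a)\ge0$ for positive semidefinite $a\in A(R')$ and $\varphi(1)=1$, and pure states are extremal states. $P_w=(w_i\overline{w_j})_{i,j}$. *)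

From mathcomp Require Import all_boot all_order all_algebra.
From mathcomp Require Import reals.
From mathcomp.real_closed Require Import complex.
Set Implicit Arguments. Unset Strict Implicit. Unset Printing Implicit Defensive.
Import Order.TTheory GRing.Theory Num.Theory.
Local Open Scope ring_scope.

Definition tolerance (k : nat) (Rel : rel 'I_k) : Prop :=
  reflexive Rel /\ symmetric Rel.

Definition tol_graph (k : nat) (Rel : rel 'I_k) : rel 'I_k :=
  fun i j => (i != j) && Rel i j.

Definition graph_connected (k : nat) (Rel : rel 'I_k) : Prop :=
  forall i j : 'I_k, connect (tol_graph Rel) i j.

Definition inA (R : realType) (k : nat) (Rel : rel 'I_k) (a : 'M[R[i]]_k) : Prop :=
  forall i j, ~~ Rel i j -> a i j = 0.

(* Truncation map T'(b) = sum_{(i,j) in Rel} E_ii b E_jj. *)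
Definition trunc (R : realType) (k : nat) (Rel : rel 'I_k) (b : 'M[R[i]]_k)
  : 'M[R[i]]_k :=
  \matrix_(i, j) (if Rel i j then b i j else 0).

Definition psd (R : realType) (k : nat) (a : 'M[R[i]]_k) : Prop :=
  forall v : 'cV[R[i]]_k, 0 <= ((map_mx Num.conj v)^T *m a *m v) 0 0.

Definition Pw (R : realType) (k : nat) (w : 'cV[R[i]]_k) : 'M[R[i]]_k :=
  \matrix_(i, j) (w i 0 * (w j 0)^*).

(* States of the operator system A(Rel); a functional is represented by a
   function on all matrices, only its values on A(Rel) being relevant. *)
Definition is_state (R : realType) (k : nat) (Rel : rel 'I_k)
  (phi : 'M[R[i]]_k -> R[i]) : Prop :=
  [/\ (forall (c : R[i]) a b, inA Rel a -> inA Rel b ->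
         phi (c *: a + b) = c * phi a + phi b),
      (forall a, inA Rel a -> psd a -> 0 <= phi a) &
      phi 1%:M = 1].

(* Pure state: an extreme point of the state space. (0 < t < 1 in the order
   of R[i] forces t to be real.) *)
Definition is_pure_state (R : realType) (k : nat) (Rel : rel 'I_k)
  (phi : 'M[R[i]]_k -> R[i]) : Prop :=
  is_state Rel phi /\
  forall (t : R[i]) (phi1 phi2 : 'M[R[i]]_k -> R[i]),
    0 < t < 1 -> is_state Rel phi1 -> is_state Rel phi2 ->
    (forall a, inA Rel a -> phi a = t * phi1 a + (1 - t) * phi2 a) ->
    forall a, inA Rel a -> phi1 a = phi2 a.

From mathcomp Require Import all_boot all_order all_algebra.
From mathcomp Require Import reals.
From mathcomp.real_closed Require Import complex.
From mathcomp Require Import ring.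
Import Order.TTheory GRing.Theory Num.Theory.
Local Open Scope ring_scope.

(* On A(Rel) the functional a |-> Tr(T'(P_w) a) is the vector state <a w, w>.
   If the graph of Rel is disconnected, let S be a connected component: every
   matrix of A(Rel) is block diagonal with respect to S and its complement, so
   the vector state of w is the convex combination, with weights |w_S|^2 and
   |w_{S^c}|^2, of the normalised vector states of the two restrictions of w.
   Both weights are positive since w has no zero entry, and the two states
   differ on E_ii for i in S, so the state is not pure. *)

Section VectorStates.

Context {R : realType} {k : nat}.
Implicit Types (v w : 'cV[R[i]]_k) (a : 'M[R[i]]_k) (S : pred 'I_k).

Definition vec_form v a : R[i] := ((map_mx Num.conj v)^T *m a *m v) 0 0.

Definition vec_state v a : R[i] := (vec_form v 1%:M)^-1 * vec_form v a.

Definition col_mask S v : 'cV[R[i]]_k := \col_i (if S i then v i 0 else 0).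

Lemma vec_formE v a :
  vec_form v a = \sum_i \sum_j (v j 0)^* * a j i * v i 0.
Proof.
rewrite /vec_form mxE; apply: eq_bigr => i _; rewrite mxE big_distrl.
by apply: eq_bigr => j _; rewrite !mxE.
Qed.

Lemma vec_formDZ v c a b :
  vec_form v (c *: a + b) = c * vec_form v a + vec_form v b.
Proof. by rewrite /vec_form mulmxDr mulmxDl -scalemxAr -scalemxAl !mxE. Qed.

Lemma vec_form1 v : vec_form v 1%:M = \sum_i `|v i 0| ^+ 2.
Proof.
rewrite vec_formE; apply: eq_bigr => i _; rewrite (bigD1 i) //= big1 => [|j ji].
  by rewrite !mxE eqxx mulr1 addr0 normCKC.
by rewrite !mxE (negbTE ji) mulr0 mul0r.
Qed.

Lemma vec_form_delta v p : vec_form v (delta_mx p p) = `|v p 0| ^+ 2.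
Proof.
rewrite vec_formE (bigD1 p) //= [X in _ + X]big1 => [|i ip]; last first.
  by rewrite big1 // => j _; rewrite !mxE (negbTE ip) andbF mulr0 mul0r.
rewrite (bigD1 p) //= big1 => [|j jp]; last by rewrite !mxE (negbTE jp) /= mulr0 mul0r.
by rewrite !mxE eqxx mulr1 !addr0 normCKC.
Qed.

Lemma vec_form1_gt0 v p : v p 0 != 0 -> 0 < vec_form v 1%:M.
Proof.
move=> vp_nz; rewrite vec_form1 (bigD1 p) //=.
apply: ltr_wpDr; first by apply: sumr_ge0 => i _; rewrite exprn_ge0.
by rewrite exprn_gt0 ?normr_gt0.
Qed.

Lemma is_state_vec_state (Rel : rel 'I_k) v :
  0 < vec_form v 1%:M -> is_state Rel (vec_state v).
Proof.
move=> v_gt0; split=> [c a b _ _ | a _ a_psd |].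
- by rewrite /vec_state vec_formDZ mulrDr mulrCA.
- by apply: mulr_ge0; [rewrite invr_ge0 ltW | exact: a_psd].
- by rewrite /vec_state mulVf ?gt_eqF.
Qed.

Lemma vec_form_col_mask_split S v a :
  (forall i j, S i != S j -> a i j = 0) ->
  vec_form v a = vec_form (col_mask S v) a + vec_form (col_mask (predC S) v) a.
Proof.
move=> a_blockdiag; rewrite !vec_formE -big_split; apply: eq_bigr => i _.
rewrite -big_split; apply: eq_bigr => j _; rewrite !mxE /=.
case: (S i) (S j) (a_blockdiag j i) => [] [] /= => [_ | /(_ isT) -> | /(_ isT) -> | _];
  by rewrite ?conjC0 ?mulr0 ?mul0r ?addr0 ?add0r.
Qed.

Lemma trace_trunc_Pw (Rel : rel 'I_k) w a : symmetric Rel -> inA Rel a ->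
  \tr (trunc Rel (Pw w) *m a) = vec_form w a.
Proof.
move=> Rsym aA; rewrite vec_formE; apply: eq_bigr => i _; rewrite mxE.
apply: eq_bigr => j _; rewrite !mxE.
case Rij: (Rel i j); first by ring.
by rewrite aA ?mulr0 ?mul0r // Rsym Rij.
Qed.

Lemma vec_state_not_pure (Rel : rel 'I_k) S w (phi : 'M[R[i]]_k -> R[i]) i0 j0 :
  reflexive Rel -> (forall i j, Rel i j -> S i = S j) ->
  S i0 -> ~~ S j0 -> w i0 0 != 0 -> w j0 0 != 0 -> vec_form w 1%:M = 1 ->
  (forall a, inA Rel a -> phi a = vec_form w a) ->
  ~ is_pure_state Rel phi.
Proof.
move=> Rrefl S_closed Si0 Sj0 wi0_nz wj0_nz w_unit phi_vec [_ phi_pure].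
set v1 := col_mask S w; set v2 := col_mask (predC S) w.
have block_diag a : inA Rel a -> forall i j, S i != S j -> a i j = 0.
  by move=> aA i j S_ij; apply: aA; apply: contra S_ij => /S_closed ->.
have v1_gt0 : 0 < vec_form v1 1%:M by apply: (vec_form1_gt0 _ i0); rewrite mxE Si0.
have v2_gt0 : 0 < vec_form v2 1%:M by apply: (vec_form1_gt0 _ j0); rewrite mxE /= Sj0.
have weights : 1 - vec_form v1 1%:M = vec_form v2 1%:M.
  rewrite -[X in X - _]w_unit (vec_form_col_mask_split S w) => [|i j].
    by rewrite addrC addKr.
  by case: (eqVneq i j) => [-> | ij]; rewrite ?eqxx // mxE (negbTE ij) mulr0n.
have t_in01 : 0 < vec_form v1 1%:M < 1.
  by rewrite v1_gt0 -subr_gt0 weights.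
have phi_convex a : inA Rel a ->
    phi a = vec_form v1 1%:M * vec_state v1 a + (1 - vec_form v1 1%:M) * vec_state v2 a.
  move=> aA; rewrite weights /vec_state !mulVKf ?gt_eqF // phi_vec //.
  exact: vec_form_col_mask_split (block_diag a aA).
have deltaA : inA Rel (delta_mx i0 i0 : 'M[R[i]]_k).
  move=> i j; rewrite mxE; case: (eqVneq i0 i) => [<- | _]; last by rewrite mulr0n.
  by case: (eqVneq i0 j) => [<- | _]; rewrite ?Rrefl ?mulr0n.
have := phi_pure _ _ _ t_in01 (is_state_vec_state Rel v1 v1_gt0)
  (is_state_vec_state Rel v2 v2_gt0) phi_convex _ deltaA.
rewrite /vec_state !vec_form_delta !mxE /= Si0 normr0 expr0n mulr0 => /eqP.
by rewrite mulf_eq0 invr_eq0 gt_eqF //= expf_eq0 normr_eq0 (negbTE wi0_nz).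
Qed.

End VectorStates.

Lemma connect_tol_graph_closed (k : nat) (Rel : rel 'I_k) x i j :
  symmetric Rel -> Rel i j ->
  connect (tol_graph Rel) x i = connect (tol_graph Rel) x j.
Proof.
move=> Rsym Rij; have graph_sym : connect_sym (tol_graph Rel).
  by apply: sym_connect_sym => y z; rewrite /tol_graph eq_sym Rsym.
apply: (same_connect_r graph_sym); case: (eqVneq i j) => [-> | ij].
  exact: connect0.
by apply: connect1; rewrite /tol_graph ij Rij.
Qed.

Theorem lemma4p14 (R : realType) (k : nat) (w : 'cV[R[i]]_k)
  (Rel : rel 'I_k) :
  \sum_(i < k) `|w i 0| ^+ 2 = 1 ->
  (forall i : 'I_k, w i 0 != 0) ->
  tolerance Rel ->
  is_pure_state Rel (fun a : 'M[R[i]]_k => \tr (trunc Rel (Pw w) *m a)) ->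
  graph_connected Rel.
Proof.
move=> w_unit w_nz [Rrefl Rsym] pure i0 j0.
pose S := connect (tol_graph Rel) i0.
have S_closed i j : Rel i j -> S i = S j by apply: connect_tol_graph_closed.
have w_unit_form : vec_form w 1%:M = 1 by rewrite vec_form1.
have tr_vec_form a : inA Rel a -> \tr (trunc Rel (Pw w) *m a) = vec_form w a.
  exact: trace_trunc_Pw.
apply: contraPT pure => not_conn.
exact: (vec_state_not_pure Rel S w _ i0 j0 Rrefl S_closed (connect0 _ i0) not_conn
  (w_nz i0) (w_nz j0) w_unit_form tr_vec_form).
Qed.
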